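(* Consider a planner with budget $A>0$ who chooses an inspection rate $\alpha\in(0,1)$ with $\alpha\le A$ (unit cost) to maximise the steady-state truth prevalence $\theta_0(\alpha)$; let $\alpha^\ast$ denote an optimal choice. Then there exists a value $\bar\lambda$ such that: (i) for all values of $\lambda>0$ and $x\in[0,1)$ there exists $\underline{A}$ such that for all $A<\underline{A}$ it is optimal to set $\alpha^\ast=A$; (ii) for all values of $\lambda$ and $x$ there exists $\bar A$ such that for all $A>\bar A$ it is optimal to set $\alpha^\ast=A$; (iii) for $\lambda<\bar\lambda$ there exists a range of budgets with $\underline{A}\le A\le\bar A$ for which it is optimal to set $\alpha^\ast<A$; in particular, when $A$ is just sufficient to fully eradicate the rumor (i.e. $A=1-\frac{1}{\lambda(1-x)}$), it may instead be optimal to choose $\alpha^\ast<A$ and let the rumor survive.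
   Context: Model: a population of mass $1$; mass $x$ of type-$0$ agents (biased towards the truth) and $1-x$ of type-$1$ agents (biased towards the rumor). A fraction $\alpha$ of agents of each type inspect messages; non-inspecting agents believe only the message matching their type, inspecting agents believe and transmit the truth upon receiving either message. $\lambda=k\nu/\delta>0$ is the diffusion rate ($k$ meetings per period, transmission rate $\nu$, death rate $\delta$). The steady-state rumor prevalence is $\theta_1(\alpha)=\max\{(1-\alpha)(1-x)-1/\lambda,0\}$; the rumor is eradicated when $\theta_1=0$. The steady-state truth prevalence $\theta_0(\alpha)$ is the unique positive fixed point (when it exists, and $0$ otherwise) of $H(\theta_0)=\alpha\frac{\lambda(\theta_0+\theta_1)}{1+\lambda(\theta_0+\theta_1)}+x(1-\alpha)\frac{\lambda\theta_0}{1+\lambda\theta_0}$; when $\theta_1=0$ it equals $\max\{\alpha(1-x)+x-1/\lambda,0\}$. *)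

From Stdlib Require Import Reals ClassicalEpsilon.
Open Scope R_scope.

(* Steady-state rumor prevalence theta_1(alpha). *)
Definition theta1 (lam x a : R) : R :=
  Rmax ((1 - a) * (1 - x) - 1 / lam) 0.

Definition H (lam x a t : R) : R :=
  a * (lam * (t + theta1 lam x a) / (1 + lam * (t + theta1 lam x a)))
  + x * (1 - a) * (lam * t / (1 + lam * t)).

Definition theta0 (lam x a : R) : R :=
  match excluded_middle_informative (exists t, 0 < t /\ H lam x a t = t) with
  | left h => proj1_sig (constructive_indefinite_description _ h)
  | right _ => 0
  end.

Definition optimal (lam x A a : R) : Prop :=
  0 < a < 1 /\ a <= A /\
  forall b, 0 < b < 1 -> b <= A -> theta0 lam x b <= theta0 lam x a.

From Stdlib Require Import Reals Ranalysis5 Lra Psatz ClassicalEpsilon.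
Open Scope R_scope.

(* H(t)/t is strictly decreasing and H < 1, so theta0 obeys a comparison principle: for
   t > 0, t <= theta0 iff t <= H t.  Hence theta0 inherits pointwise orderings of H, and
   it depends continuously on the inspection rate a because H does.
   (i) For small budgets the rumor survives at every feasible rate, and there raising a
   raises H pointwise.
   (ii) Near a = 1 the rumor is eradicated and theta0 = a (1 - x) + x - 1/lam is close to
   1 - 1/lam, whereas at any rate where the rumor survives
   theta0 <= (1 - 1/lam) * 2 lam / (1 + 2 lam).
   (iii) Take lambar = 2.  Then theta0 vanishes at a = 0 and on the whole interval between
   the eradication budget Ae = 1 - 1/(lam (1 - x)) and A2 = 1 - (1 - 1/lam)/(1 - x), which
   is non-empty because 1/lam > 1/2; it is positive at Ae/2.  Its maximiser on [0, Ae]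
   is therefore an interior rate, optimal for every budget in [Ae, A2]. *)

Lemma continuity_pt_lt_locally (g : R -> R) a0 c :
  continuity_pt g a0 -> g a0 < c ->
  exists d, 0 < d /\ forall a, Rabs (a - a0) < d -> g a < c.
Proof.
  intros Hg Hc.
  destruct (Hg (c - g a0)) as [d [Hd Near]]; [lra|].
  exists d; split; [exact Hd|]. intros a Ha.
  destruct (Req_dec a a0) as [->|Hne]; [exact Hc|].
  assert (D : Rdist (g a) (g a0) < c - g a0) by (apply Near; repeat split; auto).
  unfold Rdist in D. apply Rabs_def2 in D. lra.
Qed.

Lemma continuity_pt_gt_locally (g : R -> R) a0 c :
  continuity_pt g a0 -> c < g a0 ->
  exists d, 0 < d /\ forall a, Rabs (a - a0) < d -> c < g a.
Proof.
  intros Hg Hc.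
  destruct (continuity_pt_lt_locally (- g)%F a0 (- c)) as [d [Hd Near]].
  - now apply continuity_pt_opp.
  - unfold opp_fct; lra.
  - exists d; split; [exact Hd|]. intros a Ha. specialize (Near a Ha). unfold opp_fct in Near. lra.
Qed.

Definition clamp01 (a : R) : R := Rmax 0 (Rmin a 1).

Lemma clamp01_range a : 0 <= clamp01 a <= 1.
Proof. unfold clamp01, Rmax, Rmin; repeat destruct Rle_dec; lra. Qed.

Lemma clamp01_id a : 0 <= a <= 1 -> clamp01 a = a.
Proof. intros; unfold clamp01, Rmax, Rmin; repeat destruct Rle_dec; lra. Qed.

Lemma clamp01_dist a b : Rabs (clamp01 a - clamp01 b) <= Rabs (a - b).
Proof.
  unfold clamp01, Rmax, Rmin; repeat destruct Rle_dec; unfold Rabs; repeat destruct Rcase_abs; lra.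
Qed.

Section Prevalence.

Variables lam x : R.
Hypothesis lam_pos : 0 < lam.
Hypothesis x_range : 0 <= x < 1.

Definition sat (w : R) : R := lam * w / (1 + lam * w).

Lemma H_sat a t : H lam x a t = a * sat (t + theta1 lam x a) + x * (1 - a) * sat t.
Proof. reflexivity. Qed.

Lemma sat_complement w : 0 <= w -> 1 - sat w = / (1 + lam * w).
Proof. intros; unfold sat; field; nra. Qed.

Lemma sat_ge0 w : 0 <= w -> 0 <= sat w.
Proof. intros; unfold sat, Rdiv; apply Rmult_le_pos; [nra|]; apply Rlt_le, Rinv_0_lt_compat; nra. Qed.

Lemma sat_pos w : 0 < w -> 0 < sat w.
Proof. intros; unfold sat, Rdiv; apply Rmult_lt_0_compat; [nra|]; apply Rinv_0_lt_compat; nra. Qed.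

Lemma sat_lt1 w : 0 <= w -> sat w < 1.
Proof.
  intros Hw. assert (0 < / (1 + lam * w)) by (apply Rinv_0_lt_compat; nra).
  rewrite <- (sat_complement w Hw) in *. lra.
Qed.

Lemma sat_le w1 w2 : 0 <= w1 <= w2 -> sat w1 <= sat w2.
Proof.
  intros Hw.
  assert (/ (1 + lam * w2) <= / (1 + lam * w1)) by (apply Rinv_le_contravar; nra).
  rewrite <- !sat_complement in * by lra. lra.
Qed.

Lemma sat_shift_ratio_decr s t1 t2 : 0 <= s -> 0 < t1 < t2 ->
  sat (t2 + s) * t1 < sat (t1 + s) * t2.
Proof.
  intros Hs Ht.
  assert (E : sat (t1 + s) * t2 - sat (t2 + s) * t1
     = lam * (t2 - t1) * (s + lam * (t1 + s) * (t2 + s)) /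
       ((1 + lam * (t1 + s)) * (1 + lam * (t2 + s))))
    by (unfold sat; field; split; nra).
  assert (0 < lam * (t1 + s) * (t2 + s)) by (apply Rmult_lt_0_compat; nra).
  assert (0 < lam * (t2 - t1) * (s + lam * (t1 + s) * (t2 + s)) /
       ((1 + lam * (t1 + s)) * (1 + lam * (t2 + s)))).
  { unfold Rdiv; apply Rmult_lt_0_compat; [apply Rmult_lt_0_compat; nra|].
    apply Rinv_0_lt_compat, Rmult_lt_0_compat; nra. }
  lra.
Qed.

Lemma sat_fixpoint c t : 0 < t -> c * sat t = t -> c * lam = 1 + lam * t.
Proof.
  intros Ht E.
  assert (E2 : c * sat t * (1 + lam * t) = c * lam * t) by (unfold sat; field; nra).
  rewrite E in E2. apply (Rmult_eq_reg_r t); lra.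
Qed.

Lemma theta1_ge0 a : 0 <= theta1 lam x a.
Proof. apply Rmax_r. Qed.

Lemma theta1_eradicated a : (1 - a) * (1 - x) - 1 / lam <= 0 -> theta1 lam x a = 0.
Proof. apply Rmax_right. Qed.

Lemma theta1_surviving a : 0 <= (1 - a) * (1 - x) - 1 / lam ->
  theta1 lam x a = (1 - a) * (1 - x) - 1 / lam.
Proof. apply Rmax_left. Qed.

Lemma theta1_continuity_pt a0 : continuity_pt (theta1 lam x) a0.
Proof.
  apply continuity_pt_locally_ext with (a := 1)
    (f := fun a => ((1 - a) * (1 - x) - 1 / lam + Rabs ((1 - a) * (1 - x) - 1 / lam)) / 2);
    [lra| |reg].
  intros a _; unfold theta1, Rmax, Rabs; destruct Rle_dec, Rcase_abs; lra.
Qed.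

Lemma H_lt1 a t : 0 <= a <= 1 -> 0 < t -> H lam x a t < 1.
Proof.
  intros Ha Ht. rewrite H_sat.
  pose proof (theta1_ge0 a) as T.
  pose proof (sat_lt1 (t + theta1 lam x a) ltac:(lra)).
  pose proof (sat_ge0 (t + theta1 lam x a) ltac:(lra)).
  pose proof (sat_lt1 t ltac:(lra)). pose proof (sat_ge0 t ltac:(lra)).
  set (g := sat (t + theta1 lam x a)) in *. set (f := sat t) in *.
  assert (x * ((1 - a) * f) <= 1 * ((1 - a) * f)) by (apply Rmult_le_compat_r; nra).
  destruct (Rle_lt_or_eq_dec 0 a (proj1 Ha)) as [Ha0|<-]; [|lra].
  assert (a * g < a * 1) by (apply Rmult_lt_compat_l; lra).
  assert ((1 - a) * f <= (1 - a) * 1) by (apply Rmult_le_compat_l; lra).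
  lra.
Qed.

Lemma H_fixpoint_nondeg a t : 0 <= a -> 0 < t -> H lam x a t = t -> 0 < a \/ 0 < x.
Proof.
  intros Ha Ht E. rewrite H_sat in E.
  destruct (Rle_lt_or_eq_dec 0 a Ha) as [|<-]; [now left|].
  destruct (Rle_lt_or_eq_dec 0 x (proj1 x_range)) as [|<-]; [now right|].
  lra.
Qed.

Lemma H_ratio_decr a t1 t2 : 0 <= a <= 1 -> 0 < a \/ 0 < x -> 0 < t1 < t2 ->
  H lam x a t2 * t1 < H lam x a t1 * t2.
Proof.
  intros Ha Hnd Ht. rewrite !H_sat.
  pose proof (sat_shift_ratio_decr (theta1 lam x a) t1 t2 (theta1_ge0 a) Ht) as G.
  pose proof (sat_shift_ratio_decr 0 t1 t2 (Rle_refl 0) Ht) as F. rewrite !Rplus_0_r in F.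
  destruct (Rle_lt_or_eq_dec 0 a (proj1 Ha)) as [Ha0|<-].
  - assert (0 <= x * (1 - a)) by nra. nra.
  - destruct Hnd as [|Hx]; [lra|]. nra.
Qed.

Lemma H_fixpoint_unique a t1 t2 : 0 <= a <= 1 -> 0 < t1 -> 0 < t2 ->
  H lam x a t1 = t1 -> H lam x a t2 = t2 -> t1 = t2.
Proof.
  intros Ha H1 H2 E1 E2.
  pose proof (H_fixpoint_nondeg a t1 (proj1 Ha) H1 E1) as Hnd.
  destruct (Rtotal_order t1 t2) as [Hlt|[Heq|Hgt]]; [exfalso| exact Heq| exfalso].
  - pose proof (H_ratio_decr a t1 t2 Ha Hnd (conj H1 Hlt)). nra.
  - pose proof (H_ratio_decr a t2 t1 Ha Hnd (conj H2 Hgt)). nra.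
Qed.

Lemma H_continuity_pt_t a t0 : 0 < t0 -> continuity_pt (fun t => H lam x a t) t0.
Proof. intros Ht0; pose proof (theta1_ge0 a) as T; unfold H; reg; nra. Qed.

Lemma H_continuity_pt_a t a0 : 0 <= t -> continuity_pt (fun a => H lam x a t) a0.
Proof.
  intros Ht; pose proof (theta1_ge0 a0) as T; pose proof (theta1_continuity_pt a0) as C.
  unfold H; reg; nra.
Qed.

Lemma theta0_cases a :
  (theta0 lam x a = 0 /\ forall t, 0 < t -> H lam x a t <> t) \/
  (0 < theta0 lam x a /\ H lam x a (theta0 lam x a) = theta0 lam x a).
Proof.
  unfold theta0; destruct excluded_middle_informative as [h|n].
  - right. destruct constructive_indefinite_description as [t [Ht E]]; simpl. auto.
  - left. split; [reflexivity|]. intros t Ht E. apply n; eauto.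
Qed.

Lemma theta0_ge0 a : 0 <= theta0 lam x a.
Proof. destruct (theta0_cases a) as [[-> _]|[? _]]; lra. Qed.

Lemma theta0_fixpoint a t : 0 <= a <= 1 -> 0 < t -> H lam x a t = t -> theta0 lam x a = t.
Proof.
  intros Ha Ht E. destruct (theta0_cases a) as [[_ N]|[Hp Ef]].
  - exfalso; exact (N t Ht E).
  - exact (H_fixpoint_unique a _ t Ha Hp Ht Ef E).
Qed.

Lemma le_theta0 a t : 0 <= a <= 1 -> 0 < t -> t <= H lam x a t -> t <= theta0 lam x a.
Proof.
  intros Ha Ht Hle.
  destruct (Req_dec (H lam x a t) t) as [E|Ne].
  { rewrite (theta0_fixpoint a t); auto; lra. }
  pose proof (H_lt1 a t Ha Ht) as Ht1. pose proof (H_lt1 a 1 Ha Rlt_0_1) as H11.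
  destruct (IVT_interv (fun z => z - H lam x a z) t 1) as [z [Hz Ez]]; try lra.
  - intros c Hc. apply continuity_pt_minus.
    + apply derivable_continuous_pt, derivable_pt_id.
    + apply H_continuity_pt_t; lra.
  - rewrite (theta0_fixpoint a z); lra.
Qed.

Lemma theta0_lt a t : 0 <= a <= 1 -> 0 < t -> H lam x a t < t -> theta0 lam x a < t.
Proof.
  intros Ha Ht Hlt.
  destruct (theta0_cases a) as [[-> _]|[Hp Ef]]; [exact Ht|].
  destruct (Rlt_le_dec (theta0 lam x a) t) as [|Hge]; [assumption|exfalso].
  destruct (Rle_lt_or_eq_dec t _ Hge) as [Hlt'|Heq].
  - pose proof (H_fixpoint_nondeg a _ (proj1 Ha) Hp Ef) as Hnd.
    pose proof (H_ratio_decr a t _ Ha Hnd (conj Ht Hlt')) as C. rewrite Ef in C. nra.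
  - rewrite <- Heq in Ef. lra.
Qed.

Lemma theta0_le a t : 0 <= a <= 1 -> 0 < t -> H lam x a t <= t -> theta0 lam x a <= t.
Proof.
  intros Ha Ht Hle. destruct (Rle_lt_or_eq_dec _ _ Hle) as [Hlt|E].
  - left; now apply theta0_lt.
  - right; now apply theta0_fixpoint.
Qed.

Lemma theta0_le_compat a b : 0 <= a <= 1 -> 0 <= b <= 1 ->
  (forall t, 0 < t -> H lam x b t <= H lam x a t) -> theta0 lam x b <= theta0 lam x a.
Proof.
  intros Ha Hb Hab.
  destruct (theta0_cases b) as [[-> _]|[Hp Ef]]; [apply theta0_ge0|].
  apply le_theta0; auto. rewrite <- Ef at 1. now apply Hab.
Qed.

Lemma theta0_lt_near a0 t : 0 <= a0 <= 1 -> theta0 lam x a0 < t ->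
  exists d, 0 < d /\ forall a, 0 <= a <= 1 -> Rabs (a - a0) < d -> theta0 lam x a < t.
Proof.
  intros Ha0 Ht.
  assert (Tpos : 0 < t) by (pose proof (theta0_ge0 a0); lra).
  assert (Hlt : H lam x a0 t < t).
  { destruct (Rlt_le_dec (H lam x a0 t) t) as [|Hge]; [assumption|].
    pose proof (le_theta0 a0 t Ha0 Tpos Hge); lra. }
  destruct (continuity_pt_lt_locally _ a0 t (H_continuity_pt_a t a0 (Rlt_le _ _ Tpos)) Hlt)
    as [d [Hd Near]].
  exists d; split; [exact Hd|]. intros a Ha Had. exact (theta0_lt a t Ha Tpos (Near a Had)).
Qed.

Lemma le_theta0_near a0 t : 0 <= a0 <= 1 -> 0 < t < theta0 lam x a0 ->
  exists d, 0 < d /\ forall a, 0 <= a <= 1 -> Rabs (a - a0) < d -> t <= theta0 lam x a.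
Proof.
  intros Ha0 Ht.
  assert (Hgt : t < H lam x a0 t).
  { destruct (Rlt_le_dec t (H lam x a0 t)) as [|Hle]; [assumption|].
    pose proof (theta0_le a0 t Ha0 (proj1 Ht) Hle); lra. }
  destruct (continuity_pt_gt_locally _ a0 t (H_continuity_pt_a t a0 (Rlt_le _ _ (proj1 Ht))) Hgt)
    as [d [Hd Near]].
  exists d; split; [exact Hd|]. intros a Ha Had.
  exact (le_theta0 a t Ha (proj1 Ht) (Rlt_le _ _ (Near a Had))).
Qed.

(* [theta0] is only meaningful on [0, 1]; clamping makes it a function on [R]
   whose continuity can be fed to the extreme value theorem. *)
Lemma theta0_clamp01_continuity_pt a0 :
  continuity_pt (fun a => theta0 lam x (clamp01 a)) a0.
Proof.
  intros eps Heps. set (c0 := clamp01 a0).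
  pose proof (clamp01_range a0) as Hc0.
  destruct (theta0_lt_near c0 (theta0 lam x c0 + eps) Hc0 ltac:(lra)) as [d1 [Hd1 Up]].
  assert (Low : exists d2, 0 < d2 /\ forall a, 0 <= a <= 1 -> Rabs (a - c0) < d2 ->
                  theta0 lam x c0 - eps < theta0 lam x a).
  { destruct (Rle_lt_dec (theta0 lam x c0 - eps / 2) 0) as [Hsmall|Hbig].
    - exists 1; split; [lra|]. intros a _ _. pose proof (theta0_ge0 a); lra.
    - destruct (le_theta0_near c0 (theta0 lam x c0 - eps / 2) Hc0 ltac:(lra)) as [d2 [Hd2 Near]].
      exists d2; split; [exact Hd2|]. intros a Ha Had. pose proof (Near a Ha Had); lra. }
  destruct Low as [d2 [Hd2 Low]].
  exists (Rmin d1 d2); split; [now apply Rmin_pos|].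
  intros a [_ Ha]. simpl in *. unfold Rdist in *.
  assert (Hdist : Rabs (clamp01 a - c0) < Rmin d1 d2)
    by (eapply Rle_lt_trans; [apply clamp01_dist| exact Ha]).
  pose proof (Rmin_l d1 d2) as Hd1'. pose proof (Rmin_r d1 d2) as Hd2'.
  pose proof (Up (clamp01 a) (clamp01_range a) ltac:(lra)).
  pose proof (Low (clamp01 a) (clamp01_range a) ltac:(lra)).
  apply Rabs_def1; lra.
Qed.

Lemma theta0_eradicated a : 0 <= a <= 1 -> (1 - a) * (1 - x) - 1 / lam <= 0 ->
  theta0 lam x a = Rmax (a * (1 - x) + x - 1 / lam) 0.
Proof.
  intros Ha Hs.
  set (c := a * (1 - x) + x).
  assert (EH : forall t, H lam x a t = c * sat t).
  { intros t. rewrite H_sat, theta1_eradicated, Rplus_0_r by exact Hs. unfold c; ring. }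
  assert (Hil : 1 / lam * lam = 1) by (field; lra).
  unfold Rmax. destruct Rle_dec as [Hle|Hgt].
  - destruct (theta0_cases a) as [[-> _]|[Hp Ef]]; [reflexivity|exfalso].
    rewrite EH in Ef. apply sat_fixpoint in Ef; [|exact Hp].
    assert (c * lam <= 1 / lam * lam) by (apply Rmult_le_compat_r; lra). nra.
  - apply theta0_fixpoint; [exact Ha|lra|].
    rewrite EH. unfold sat.
    assert (0 < c) by (assert (0 < 1 / lam) by (apply Rdiv_lt_0_compat; lra); lra).
    replace (1 + lam * (c - 1 / lam)) with (c * lam) by (field; lra).
    field; lra.
Qed.

Lemma theta0_eradicated_le_compat a b : 0 <= b <= a -> a <= 1 ->
  (1 - b) * (1 - x) - 1 / lam <= 0 -> theta0 lam x b <= theta0 lam x a.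
Proof.
  intros Hb Ha Hs.
  rewrite !theta0_eradicated by nra.
  apply Rle_max_compat_r. nra.
Qed.

Lemma theta0_pos_surviving a : 0 < a <= 1 -> 0 < (1 - a) * (1 - x) - 1 / lam ->
  0 < theta0 lam x a.
Proof.
  intros Ha Hs. set (s := (1 - a) * (1 - x) - 1 / lam) in *.
  set (tau := a * sat s).
  assert (Htau : 0 < tau) by (apply Rmult_lt_0_compat; [lra|now apply sat_pos]).
  apply Rlt_le_trans with tau; [exact Htau|].
  apply le_theta0; [lra|exact Htau|].
  rewrite H_sat, theta1_surviving by (fold s; lra). fold s.
  assert (sat s <= sat (tau + s)) by (apply sat_le; lra).
  assert (0 <= x * (1 - a) * sat tau)
    by (apply Rmult_le_pos; [nra|apply sat_ge0; lra]).
  unfold tau at 1. nra.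
Qed.

Lemma theta0_at_zero : lam * x <= 1 -> theta0 lam x 0 = 0.
Proof.
  intros Hlx. destruct (theta0_cases 0) as [[-> _]|[Hp Ef]]; [reflexivity|exfalso].
  rewrite H_sat, Rmult_0_l, Rplus_0_l, Rminus_0_r, Rmult_1_r in Ef.
  apply sat_fixpoint in Ef; [|exact Hp]. nra.
Qed.

Lemma H_le_compat_surviving a b t : 0 <= b <= a -> a <= 1 ->
  b <= (1 - a) * (1 - x) - 1 / lam -> 0 < t -> H lam x b t <= H lam x a t.
Proof.
  intros Hb Ha Hs Ht.
  set (sa := (1 - a) * (1 - x) - 1 / lam) in *.
  set (sb := (1 - b) * (1 - x) - 1 / lam).
  assert (Esb : sb = sa + (a - b) * (1 - x)) by (unfold sa, sb; ring).
  assert (Hsa : 0 <= sa) by lra.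
  assert (Hsb : 0 <= sb) by nra.
  rewrite !H_sat, (theta1_surviving a), (theta1_surviving b) by assumption.
  fold sa sb.
  set (P := / (1 + lam * (t + sa))).
  set (Q := / (1 + lam * (t + sb))).
  set (R0 := / (1 + lam * t)).
  assert (E : a * sat (t + sa) + x * (1 - a) * sat t - (b * sat (t + sb) + x * (1 - b) * sat t)
    = (a - b) * ((1 - x) * lam * P * (t + sa - b * Q) + x * (R0 - P))).
  { unfold P, Q, R0, sat. rewrite Esb. field. repeat split; nra. }
  assert (HP : 0 < P) by (apply Rinv_0_lt_compat; nra).
  assert (HQ : Q <= 1).
  { unfold Q. rewrite <- Rinv_1. apply Rinv_le_contravar; nra. }
  assert (HR : P <= R0) by (apply Rinv_le_contravar; nra).
  assert (0 <= (1 - x) * lam * P * (t + sa - b * Q)).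
  { apply Rmult_le_pos; [|nra]. apply Rmult_le_pos; [|lra]. apply Rmult_le_pos; lra. }
  assert (0 <= x * (R0 - P)) by (apply Rmult_le_pos; lra).
  assert (0 <= (a - b) * ((1 - x) * lam * P * (t + sa - b * Q) + x * (R0 - P)))
    by (apply Rmult_le_pos; lra).
  lra.
Qed.

Lemma theta0_surviving_bound b : 0 <= b <= 1 -> 0 < (1 - b) * (1 - x) - 1 / lam ->
  theta0 lam x b <= (1 - 1 / lam) * sat 2.
Proof.
  intros Hb Hs. set (s := (1 - b) * (1 - x) - 1 / lam) in *.
  assert (Hil : 0 < 1 / lam) by (apply Rdiv_lt_0_compat; lra).
  assert (Hil1 : 1 / lam < 1) by (unfold s in Hs; nra).
  pose proof (sat_ge0 2 ltac:(lra)) as G0.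
  destruct (theta0_cases b) as [[-> _]|[Hp Ef]]; [apply Rmult_le_pos; lra|].
  set (t := theta0 lam x b) in *.
  pose proof (H_lt1 b t Hb Hp) as Ht1. rewrite Ef in Ht1.
  rewrite H_sat, theta1_surviving in Ef by (fold s; lra). fold s in Ef.
  assert (Hs1 : s < 1) by (unfold s; nra).
  assert (Hfg : sat t <= sat (t + s)) by (apply sat_le; lra).
  assert (Hg2 : sat (t + s) <= sat 2) by (apply sat_le; lra).
  (* [c] is the mass of agents who can believe the truth: inspectors and non-inspecting type-0 agents. *)
  set (c := b + x * (1 - b)).
  assert (Hc : c = 1 - 1 / lam - s) by (unfold c, s; ring).
  assert (Hc0 : 0 <= c) by (unfold c; nra).
  assert (x * (1 - b) * sat t <= x * (1 - b) * sat (t + s)) by (apply Rmult_le_compat_l; nra).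
  assert (c * sat (t + s) <= c * sat 2) by (apply Rmult_le_compat_l; lra).
  assert (c * sat 2 <= (1 - 1 / lam) * sat 2) by (apply Rmult_le_compat_r; lra).
  assert (t <= c * sat (t + s)) by (unfold c; nra).
  lra.
Qed.

Lemma theta0_argmax_interior e c : 0 < e <= 1 ->
  theta0 lam x 0 = 0 -> theta0 lam x e = 0 -> 0 <= c <= e -> 0 < theta0 lam x c ->
  exists m, 0 < m < e /\ forall b, 0 <= b <= e -> theta0 lam x b <= theta0 lam x m.
Proof.
  intros He Z0 Ze Hc Hpos.
  destruct (continuity_ab_maj (fun a => theta0 lam x (clamp01 a)) 0 e ltac:(lra)
              (fun a _ => theta0_clamp01_continuity_pt a)) as [m [Max Hm]].
  assert (Max' : forall b, 0 <= b <= e -> theta0 lam x b <= theta0 lam x m).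
  { intros b Hb. specialize (Max b Hb). rewrite !clamp01_id in Max by lra. exact Max. }
  exists m; split; [|exact Max'].
  pose proof (Max' c Hc) as Hcm.
  destruct (Rle_lt_or_eq_dec 0 m (proj1 Hm)) as [|<-]; [|lra].
  destruct (Rle_lt_or_eq_dec m e (proj2 Hm)) as [| ->]; lra.
Qed.

Lemma small_budget_optimal :
  exists Alow, 0 < Alow /\ forall A, 0 < A < Alow -> optimal lam x A A.
Proof.
  set (k := (1 - x) - 1 / lam).
  assert (Hil : 0 < 1 / lam) by (apply Rdiv_lt_0_compat; lra).
  destruct (Rle_lt_dec k 0) as [Hk|Hk].
  - exists (1 / 2). split; [lra|]. intros A HA.
    split; [lra|]. split; [lra|]. intros b Hb HbA.
    apply theta0_eradicated_le_compat; unfold k in Hk; nra.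
  - exists (k / 2). split; [lra|]. intros A HA.
    split; [unfold k in *; lra|]. split; [lra|]. intros b Hb HbA.
    apply theta0_le_compat; [unfold k in *; lra|lra|].
    intros t Ht. apply H_le_compat_surviving; unfold k in *; nra.
Qed.

Lemma theta0_near_one : exists Ahigh, 0 <= Ahigh < 1 /\ forall A, Ahigh < A < 1 ->
  (1 - A) * (1 - x) - 1 / lam <= 0 /\ (1 - 1 / lam) * sat 2 <= theta0 lam x A.
Proof.
  assert (Hil : 1 / lam * lam = 1) by (field; lra).
  assert (Hil0 : 0 < 1 / lam) by (apply Rdiv_lt_0_compat; lra).
  pose proof (sat_ge0 2 ltac:(lra)) as G0. pose proof (sat_lt1 2 ltac:(lra)) as G1.
  destruct (Rle_lt_dec lam 1) as [Hl1|Hl1].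
  - exists 0. split; [lra|]. intros A HA.
    assert (1 <= 1 / lam) by nra. pose proof (theta0_ge0 A) as T.
    split; nra.
  - assert (Hil1 : 1 / lam < 1) by nra.
    set (m := Rmin (1 / lam) ((1 - 1 / lam) * (1 - sat 2))).
    assert (Hm : 0 < m) by (apply Rmin_pos; nra).
    pose proof (Rmin_l (1 / lam) ((1 - 1 / lam) * (1 - sat 2))) as Hm1.
    pose proof (Rmin_r (1 / lam) ((1 - 1 / lam) * (1 - sat 2))) as Hm2.
    exists (Rmax 0 (1 - m)). split; [split; [apply Rmax_l|apply Rmax_lub_lt; lra]|].
    intros A [HA1 HA2].
    pose proof (Rle_lt_trans _ _ _ (Rmax_l 0 (1 - m)) HA1).
    pose proof (Rle_lt_trans _ _ _ (Rmax_r 0 (1 - m)) HA1).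
    assert (HAm : (1 - A) * (1 - x) < m) by nra.
    split; [fold m in Hm1; lra|].
    rewrite theta0_eradicated by (fold m in Hm1; lra).
    eapply Rle_trans; [|apply Rmax_l]. fold m in Hm2. nra.
Qed.

Lemma large_budget_optimal :
  exists Ahigh, Ahigh < 1 /\ forall A, Ahigh < A < 1 -> optimal lam x A A.
Proof.
  destruct theta0_near_one as [Ahigh [HAh Near]].
  exists Ahigh; split; [lra|]. intros A HA. destruct (Near A HA) as [HerA HBA].
  split; [lra|]. split; [lra|]. intros b Hb HbA.
  destruct (Rle_lt_dec ((1 - b) * (1 - x) - 1 / lam) 0) as [Her|Hsurv].
  - apply theta0_eradicated_le_compat; lra.
  - pose proof (theta0_surviving_bound b ltac:(lra) Hsurv); lra.
Qed.

Lemma underspending_optimal : lam < 2 -> 1 < lam * (1 - x) ->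
  exists A1 A2, A1 < A2 /\ A1 <= 1 - 1 / (lam * (1 - x)) <= A2 /\
    forall A, A1 <= A <= A2 -> exists a, optimal lam x A a /\ a < A.
Proof.
  intros Hl2 Hly. set (y := 1 - x) in *.
  set (Ae := 1 - 1 / (lam * y)). set (A2 := 1 - (1 - 1 / lam) / y).
  assert (Hy : 0 < y <= 1) by (unfold y; lra).
  assert (E1 : (1 - Ae) * y = 1 / lam) by (unfold Ae; field; lra).
  assert (E2 : (1 - A2) * y = 1 - 1 / lam) by (unfold A2; field; lra).
  assert (Hil : 1 / lam * lam = 1) by (field; lra).
  assert (Hil1 : 1 / 2 < 1 / lam < 1) by (split; nra).
  assert (HAe : 0 < Ae < A2) by (split; nra).
  assert (HA2 : A2 < 1) by nra.
  assert (Gap : forall b, Ae <= b <= A2 -> theta0 lam x b = 0).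
  { intros b Hb.
    assert (Hby : (1 - A2) * y <= (1 - b) * y <= (1 - Ae) * y)
      by (split; apply Rmult_le_compat_r; lra).
    rewrite theta0_eradicated by (fold y; lra). apply Rmax_right.
    replace (b * (1 - x) + x - 1 / lam) with (1 - (1 - b) * y - 1 / lam) by (unfold y; ring).
    lra. }
  destruct (theta0_argmax_interior Ae (Ae / 2)) as [m [Hm Max]].
  - lra.
  - apply theta0_at_zero. unfold y in *; nra.
  - apply Gap; lra.
  - lra.
  - apply theta0_pos_surviving; [lra|]. fold y; nra.
  - exists Ae, A2. split; [lra|]. split; [lra|].
    intros A HA. exists m. split; [|lra]. split; [lra|]. split; [lra|]. intros b Hb HbA.
    destruct (Rle_lt_dec b Ae) as [Hb1|Hb1].
    + apply Max; lra.
    + rewrite Gap by lra. apply theta0_ge0.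
Qed.

End Prevalence.

Theorem proposition2 :
  exists lambar : R, 1 < lambar /\
    (* (i) small budgets: spend everything *)
    (forall lam x, 0 < lam -> 0 <= x < 1 ->
       exists Alow, 0 < Alow /\
         forall A, 0 < A < Alow -> optimal lam x A A) /\
    (* (ii) large budgets: spend everything *)
    (forall lam x, 0 < lam -> 0 <= x < 1 ->
       exists Ahigh, Ahigh < 1 /\
         forall A, Ahigh < A < 1 -> optimal lam x A A) /\
    (* (iii) low diffusion: a range of budgets, containing the eradication
       budget 1 - 1/(lam (1-x)), where it is optimal to under-spend *)
    (forall lam x, 0 < lam < lambar -> 0 <= x < 1 -> 1 < lam * (1 - x) ->
       exists A1 A2, A1 < A2 /\
         A1 <= 1 - 1 / (lam * (1 - x)) <= A2 /\
         forall A, A1 <= A <= A2 ->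
           exists a, optimal lam x A a /\ a < A).
Proof.
  exists 2. split; [lra|]. split; [|split].
  - exact small_budget_optimal.
  - exact large_budget_optimal.
  - intros lam x Hlam Hx. exact (underspending_optimal lam x (proj1 Hlam) Hx (proj2 Hlam)).
Qed.
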